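(* Let $G=(V,E,w)$ be a graph with positive edge weights, let $e\in E$, and let $L^{\mathrm{down}}=\widetilde\partial^{T}\widetilde\partial$ be the down Laplacian of $G$. Then $$ w_e\, B_e^{2} = \big((L^{\mathrm{down}})^{+}\big)_{ee} = \big\|1_e^{T}\widetilde\partial^{+}\big\|^{2}, $$ where $1_e^{T}\widetilde\partial^{+}$ is the row of $\widetilde\partial^{+}$ corresponding to $e$.
   Context: $G=(V,E,w)$ is an undirected graph with $n=|V|$ vertices, $m=|E|$ edges and positive weights $w_e$. Each edge $e=\{s,t\}$ is given an arbitrary fixed orientation $(s,t)$. The boundary (signed incidence) matrix $\partial\in\mathbb{R}^{n\times m}$ has column $\partial 1_e=1_s-1_t$ for $e=(s,t)$, where $1_x$ denotes the indicator vector of a vertex or edge $x$. $W\in\mathbb{R}^{m\times m}$ is the diagonal matrix of edge weights, $\widetilde\partial=\partial W^{1/2}$, and the graph Laplacian is $L=\partial W\partial^{T}=\widetilde\partial\widetilde\partial^{T}$ (equivalently $D-A$ with $D$ the weighted degree matrix and $A$ the weighted adjacency matrix). $M^{+}$ denotes the Moore–Penrose pseudoinverse, and $L^{2+}=(L^{+})^2$. The down Laplacian is $L^{\mathrm{down}}=\widetilde\partial^{T}\widetilde\partial=W^{1/2}\partial^{T}\partial W^{1/2}\in\mathbb{R}^{m\times m}$. The biharmonic distance between vertices $s,t$ is $B_{st}=\sqrt{(1_s-1_t)^{T}L^{2+}(1_s-1_t)}$, and for an edge $e=\{s,t\}$, $B_e:=B_{st}$. *)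

From HB Require Import structures.
From mathcomp Require Import all_boot all_order all_algebra.
From mathcomp Require Import reals.
From Stdlib Require Import ClassicalEpsilon.
Set Implicit Arguments. Unset Strict Implicit. Unset Printing Implicit Defensive.
Import Order.TTheory GRing.Theory Num.Theory.
Local Open Scope ring_scope.

Definition is_mp_pinv (R : realType) (p q : nat)
    (A : 'M[R]_(p, q)) (X : 'M[R]_(q, p)) : Prop :=
  [/\ A *m X *m A = A, X *m A *m X = X,
      (A *m X)^T = A *m X & (X *m A)^T = X *m A].

Definition pinv (R : realType) (p q : nat) (A : 'M[R]_(p, q)) : 'M[R]_(q, p) :=
  epsilon (inhabits 0) (is_mp_pinv A).

Definition boundary (R : realType) (n m : nat) (src dst : 'I_m -> 'I_n)
  : 'M[R]_(n, m) :=
  \matrix_(v < n, e < m) (((v == src e)%:R) - ((v == dst e)%:R)).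

Definition Wmat (R : realType) (m : nat) (w : 'I_m -> R) : 'M[R]_m :=
  diag_mx (\row_e w e).
Definition Whalf (R : realType) (m : nat) (w : 'I_m -> R) : 'M[R]_m :=
  diag_mx (\row_e Num.sqrt (w e)).

Definition dtilde (R : realType) (n m : nat) (src dst : 'I_m -> 'I_n)
  (w : 'I_m -> R) : 'M[R]_(n, m) :=
  boundary R src dst *m Whalf w.

Definition laplacian (R : realType) (n m : nat) (src dst : 'I_m -> 'I_n)
  (w : 'I_m -> R) : 'M[R]_n :=
  boundary R src dst *m Wmat w *m (boundary R src dst)^T.

Definition down_laplacian (R : realType) (n m : nat) (src dst : 'I_m -> 'I_n)
  (w : 'I_m -> R) : 'M[R]_m :=
  (dtilde src dst w)^T *m dtilde src dst w.

Definition ind (R : realType) (k : nat) (x : 'I_k) : 'cV[R]_k := delta_mx x 0.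

Definition biharmonic (R : realType) (n m : nat) (src dst : 'I_m -> 'I_n)
  (w : 'I_m -> R) (s t : 'I_n) : R :=
  let d := ind R s - ind R t in
  let Lp := pinv (laplacian src dst w) in
  Num.sqrt ((d^T *m (Lp *m Lp) *m d) 0 0).

Definition biharmonic_edge (R : realType) (n m : nat) (src dst : 'I_m -> 'I_n)
  (w : 'I_m -> R) (e : 'I_m) : R :=
  biharmonic src dst w (src e) (dst e).

From HB Require Import structures.
From mathcomp Require Import all_boot all_order all_algebra.
From mathcomp Require Import reals.
From Stdlib Require Import ClassicalEpsilon.
Set Implicit Arguments. Unset Strict Implicit. Unset Printing Implicit Defensive.
Import Order.TTheory GRing.Theory Num.Theory.
Local Open Scope ring_scope.

(* Writing D for \tilde\partial and P for D^+, the Penrose conditions give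
   L^+ = (D D^T)^+ = P^T P and (L^down)^+ = (D^T D)^+ = P P^T, and they also
   give D^T (P^T P)^2 D = P P^T.  Since \partial 1_e = 1_s - 1_t and
   D 1_e = sqrt(w_e) \partial 1_e, the quadratic form defining B_e^2 is
   (1/w_e) 1_e^T D^T (L^+)^2 D 1_e = (1/w_e) ((L^down)^+)_ee, and
   (P P^T)_ee is the squared norm of row e of P. *)

Section PseudoInverse.
Variable R : realType.

Lemma mulmx_tr_eq0 p q (M : 'M[R]_(p, q)) : M *m M^T = 0 -> M = 0.
Proof.
move=> MMt0; apply/matrixP => i j; rewrite mxE.
have : \sum_k M i k ^+ 2 = 0.
  transitivity ((M *m M^T) i i); last by rewrite MMt0 mxE.
  by rewrite mxE; apply: eq_bigr => k _; rewrite mxE expr2.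
by move/psumr_eq0P => /(_ (fun k _ => sqr_ge0 _) j isT) /eqP; rewrite sqrf_eq0 => /eqP.
Qed.

Lemma row_free_mulmx_tr_unit r q (C : 'M[R]_(r, q)) :
  row_free C -> C *m C^T \in unitmx.
Proof.
move=> freeC; rewrite -row_free_unit; apply: inj_row_free => v vCCt0.
have : (v *m C) *m (v *m C)^T = 0.
  by rewrite trmx_mul mulmxA -(mulmxA v) vCCt0 mul0mx.
by move/mulmx_tr_eq0/eqP; rewrite mulmx_free_eq0 // => /eqP.
Qed.

(* (B C)^+ = C^+ B^+ with C^+ = C^T (C C^T)^-1 and B^+ = (B^T B)^-1 B^T. *)
Lemma is_mp_pinv_full_rank_factor p r q (B : 'M[R]_(p, r)) (C : 'M[R]_(r, q)) :
  row_free C -> row_free B^T ->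
  is_mp_pinv (B *m C)
    (C^T *m invmx (C *m C^T) *m invmx (B^T *m B) *m B^T).
Proof.
move=> freeC freeBt.
have uC := row_free_mulmx_tr_unit freeC.
have uB : B^T *m B \in unitmx by have := row_free_mulmx_tr_unit freeBt; rewrite trmxK.
set iC := invmx (C *m C^T); set iB := invmx (B^T *m B).
have tiC : iC^T = iC by rewrite /iC trmx_inv trmx_mul trmxK.
have tiB : iB^T = iB by rewrite /iB trmx_inv trmx_mul trmxK.
have cancelC k (Y : 'M[R]_(k, r)) : Y *m C *m C^T *m iC = Y.
  by rewrite -!mulmxA (mulmxA C) mulmxV // mulmx1.
have cancelB k (Y : 'M[R]_(k, r)) : Y *m iB *m B^T *m B = Y.
  by rewrite -!mulmxA mulVmx // mulmx1.
have AX : B *m C *m (C^T *m iC *m iB *m B^T) = B *m iB *m B^T.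
  by rewrite !mulmxA cancelC.
have XA : C^T *m iC *m iB *m B^T *m (B *m C) = C^T *m iC *m C.
  by rewrite !mulmxA cancelB.
split.
- by rewrite AX !mulmxA cancelB.
- by rewrite XA !mulmxA cancelC.
- by rewrite AX !trmx_mul trmxK tiB mulmxA.
- by rewrite XA !trmx_mul trmxK tiC mulmxA.
Qed.

Lemma is_mp_pinv_pinv p q (A : 'M[R]_(p, q)) : is_mp_pinv A (pinv A).
Proof.
rewrite /pinv; apply: epsilon_spec; rewrite -{1}(mulmx_base A).
eexists; apply: is_mp_pinv_full_rank_factor; first exact: row_base_free.
by rewrite /row_free mxrank_tr; apply: col_base_full.
Qed.

Lemma is_mp_pinv_uniq p q (A : 'M[R]_(p, q)) X Y :
  is_mp_pinv A X -> is_mp_pinv A Y -> X = Y.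
Proof.
case=> [AXA XAX AXsym XAsym] [AYA YAY AYsym YAsym].
have AtAY : A^T = A^T *m (A *m Y).
  by rewrite -AYsym -trmx_mul AYA.
have XAAt : A^T = X *m A *m A^T.
  by rewrite -XAsym -trmx_mul mulmxA AXA.
have XXtAt : X = X *m X^T *m A^T by rewrite -mulmxA -trmx_mul AXsym mulmxA XAX.
have AtYtY : Y = A^T *m Y^T *m Y by rewrite -trmx_mul YAsym YAY.
have XAY_X : X = X *m A *m Y.
  rewrite {1}XXtAt {1}AtAY !mulmxA -(mulmxA X X^T) -trmx_mul AXsym.
  by rewrite (mulmxA X A X) XAX.
have XAY_Y : Y = X *m A *m Y.
  rewrite {1}AtYtY {1}XAAt -(mulmxA (X *m A) A^T) -trmx_mul YAsym.
  by rewrite -(mulmxA (X *m A) (Y *m A)) YAY.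
by rewrite XAY_X -XAY_Y.
Qed.

Lemma pinvE p q (A : 'M[R]_(p, q)) X : is_mp_pinv A X -> pinv A = X.
Proof. exact/is_mp_pinv_uniq/is_mp_pinv_pinv. Qed.

Lemma is_mp_pinv_tr p q (A : 'M[R]_(p, q)) X :
  is_mp_pinv A X -> is_mp_pinv A^T X^T.
Proof.
case=> [AXA XAX AXsym XAsym]; split.
- by rewrite -!trmx_mul mulmxA AXA.
- by rewrite -!trmx_mul mulmxA XAX.
- by rewrite -trmx_mul XAsym.
- by rewrite -trmx_mul AXsym.
Qed.

Lemma is_mp_pinv_gram p q (A : 'M[R]_(p, q)) X :
  is_mp_pinv A X -> is_mp_pinv (A^T *m A) (X *m X^T).
Proof.
case=> [AXA XAX AXsym XAsym].
have AtAX : A^T *m A *m X = A^T by rewrite -mulmxA -AXsym -trmx_mul AXA.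
have AtXt : A^T *m X^T = X *m A by rewrite -trmx_mul XAsym.
have GX : A^T *m A *m (X *m X^T) = X *m A by rewrite mulmxA AtAX AtXt.
have XG : X *m X^T *m (A^T *m A) = X *m A.
  by rewrite -mulmxA (mulmxA X^T) -trmx_mul AXsym AXA.
split.
- by rewrite GX mulmxA -XAsym -trmx_mul mulmxA AXA.
- by rewrite XG mulmxA XAX.
- by rewrite GX XAsym.
- by rewrite XG XAsym.
Qed.

Lemma pinv_gram p q (A : 'M[R]_(p, q)) :
  pinv (A^T *m A) = pinv A *m (pinv A)^T.
Proof. exact/pinvE/is_mp_pinv_gram/is_mp_pinv_pinv. Qed.

Lemma pinv_tr p q (A : 'M[R]_(p, q)) : pinv A^T = (pinv A)^T.
Proof. exact/pinvE/is_mp_pinv_tr/is_mp_pinv_pinv. Qed.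

Lemma pinv_gram_tr p q (A : 'M[R]_(p, q)) :
  pinv (A *m A^T) = (pinv A)^T *m pinv A.
Proof. by rewrite -{1}(trmxK A) pinv_gram pinv_tr trmxK. Qed.

Lemma pinv_gram_diag p q (A : 'M[R]_(p, q)) i :
  pinv (A^T *m A) i i = \sum_j pinv A i j ^+ 2.
Proof. by rewrite pinv_gram mxE; apply: eq_bigr => j _; rewrite mxE expr2. Qed.

Lemma mulmx_tr_pinv_gram_tr_sqr p q (A : 'M[R]_(p, q)) :
  A^T *m (pinv (A *m A^T) *m pinv (A *m A^T)) *m A = pinv (A^T *m A).
Proof.
have [AXA XAX _ XAsym] := is_mp_pinv_pinv A; set X := pinv A in AXA XAX XAsym *.
have AtXtX : A^T *m X^T *m X = X by rewrite -trmx_mul XAsym XAX.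
have XtXA : X^T *m X *m A = X^T by rewrite -mulmxA -XAsym -trmx_mul XAX.
by rewrite pinv_gram_tr pinv_gram !mulmxA AtXtX -!mulmxA (mulmxA X^T) XtXA.
Qed.

End PseudoInverse.

Lemma quad_form_delta (R : pzRingType) k (M : 'M[R]_k) (i : 'I_k) :
  ((delta_mx i 0 : 'cV[R]_k)^T *m M *m (delta_mx i 0 : 'cV_k)) 0 0 = M i i.
Proof. by rewrite trmx_delta -rowE -colE !mxE. Qed.

Section GraphMatrices.
Variables (R : realType) (n m : nat) (src dst : 'I_m -> 'I_n) (w : 'I_m -> R).
Hypothesis w_ge0 : forall e, 0 <= w e.

Lemma Whalf_mul_tr : Whalf w *m (Whalf w)^T = Wmat w.
Proof.
rewrite /Whalf tr_diag_mx mulmx_diag /Wmat; congr diag_mx.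
by apply/matrixP => i j; rewrite !mxE -expr2 sqr_sqrtr.
Qed.

Lemma laplacian_dtilde :
  laplacian src dst w = dtilde src dst w *m (dtilde src dst w)^T.
Proof. by rewrite /dtilde trmx_mul mulmxA -(mulmxA _ (Whalf w)) Whalf_mul_tr. Qed.

Lemma boundary_ind e :
  boundary R src dst *m ind R e = ind R (src e) - ind R (dst e).
Proof.
apply/matrixP => v j; rewrite [j]ord1 /ind !mxE (bigD1 e) //= big1.
  by rewrite !mxE !eqxx /= !andbT mulr1 addr0.
by move=> f fe; rewrite !mxE (negbTE fe) mulr0.
Qed.

Lemma dtilde_ind e :
  dtilde src dst w *m ind R e = Num.sqrt (w e) *: (ind R (src e) - ind R (dst e)).
Proof.
rewrite /dtilde -mulmxA -boundary_ind scalemxAr; congr (_ *m _).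
apply/matrixP => f j; rewrite mul_diag_mx !mxE.
by case: (eqVneq f e) => [->|_]; rewrite ?mulr1 ?mulr0.
Qed.

Lemma biharmonic_edge_sqr e : 0 < w e ->
  w e * biharmonic_edge src dst w e ^+ 2 = pinv (down_laplacian src dst w) e e.
Proof.
move=> we_gt0; set D := dtilde src dst w; set Lp := pinv (laplacian src dst w).
have sqrt_gt0 : 0 < Num.sqrt (w e) by rewrite sqrtr_gt0.
have edge_vec : ind R (src e) - ind R (dst e) = (Num.sqrt (w e))^-1 *: (D *m ind R e).
  by rewrite dtilde_ind scalerA mulVf ?gt_eqF // scale1r.
have quad : ((D *m ind R e)^T *m (Lp *m Lp) *m (D *m ind R e)) 0 0
            = pinv (down_laplacian src dst w) e e.
  have -> : (D *m ind R e)^T *m (Lp *m Lp) *m (D *m ind R e)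
            = (ind R e)^T *m (D^T *m (Lp *m Lp) *m D) *m ind R e.
    by rewrite trmx_mul !mulmxA.
  by rewrite /Lp laplacian_dtilde mulmx_tr_pinv_gram_tr_sqr quad_form_delta.
have quad_scale c (x : 'cV[R]_n) (M : 'M[R]_n) :
    (c *: x)^T *m M *m (c *: x) = (c * c) *: (x^T *m M *m x).
  by rewrite -scalemxAr linearZ /= -!scalemxAl scalerA.
rewrite /biharmonic_edge /biharmonic /= edge_vec quad_scale mxE quad -invfM -expr2.
have down_ge0 : 0 <= pinv (down_laplacian src dst w) e e.
  by rewrite pinv_gram_diag sumr_ge0 // => f _; apply: sqr_ge0.
rewrite [Num.sqrt (w e) ^+ 2]sqr_sqrtr ?ltW // sqr_sqrtr ?mulVKf ?gt_eqF //.
by apply: mulr_ge0; rewrite // invr_ge0 ltW.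
Qed.

End GraphMatrices.

Theorem theorem3p1 (R : realType) (n m : nat) (src dst : 'I_m -> 'I_n)
    (w : 'I_m -> R)
    (Hloop : forall e, src e != dst e)
    (Hsimple : forall e f, e != f ->
       ~ ((src e == src f) && (dst e == dst f)
          || (src e == dst f) && (dst e == src f)))
    (Hw : forall e, 0 < w e)
    (e : 'I_m) :
  w e * (biharmonic_edge src dst w e) ^+ 2 = pinv (down_laplacian src dst w) e e
  /\ pinv (down_laplacian src dst w) e e
     = \sum_(v < n) (pinv (dtilde src dst w) e v) ^+ 2.
Proof.
have w_ge0 f : 0 <= w f by exact: ltW.
split; first exact: biharmonic_edge_sqr.
by rewrite /down_laplacian pinv_gram_diag.
Qed.
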